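(* Let $n\ge1$, $q\ge2$ be integers and $\mu>0$. Let $\mathbf u_1,\dots,\mathbf u_{q-2},\tilde{\mathbf r},\tilde{\mathbf s}\in\mathbb R^n$ and set $\mathbf u_q=(W_{11}\tilde{\mathbf r}+W_{12}\tilde{\mathbf s})/\sqrt{m_2}$, $\mathbf u_{q-1}=(W_{21}\tilde{\mathbf r}+W_{22}\tilde{\mathbf s})/\sqrt{m_1}$, with $W$ as in the context. Let $\mathbf w_l=\sum_{m=1}^{q-2}\alpha_{m,l}\mathbf u_m$ for $l=1,\dots,q$. Then the quantities $G_l$ and $T$ defined in the context satisfy $$G_l=\mathbf w_l\cdot\mathbf w_l+2\sqrt{\frac1\mu+\frac{q}{q-1}}\;\mathbf w_l\cdot\tilde{\mathbf r},$$ $$T=\frac12\Big(1+\mu\frac{q}{q-1}\Big)^{-1}\Big[-\frac{q}{q-1}\Big(2+\mu\frac{q}{q-1}\Big)\tilde{\mathbf r}\cdot\tilde{\mathbf r}+\frac{q}{q-1}\tilde{\mathbf s}\cdot\tilde{\mathbf s}+\frac{2}{\sqrt\mu}\sqrt{\frac{q}{q-1}}\;\tilde{\mathbf r}\cdot\tilde{\mathbf s}\Big].$$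
   Context: For $j\in\{1,2\}$: $\lambda_j=\frac12\big((\mu-1)+(-1)^{j+1}\sqrt{\mu^2-(4q^{-1}-2)\mu+1}\big)$, $m_j=\lambda_j+1$, $x_j=1-qm_j$, $N_j=q-1+x_j^2$. For $m=1,\dots,q-2$, $l=1,\dots,q$: $\alpha_{m,l}=\frac{1}{\sqrt{m(m+1)}}$ if $l\le m$, $\frac{-m}{\sqrt{m(m+1)}}$ if $l=m+1$, $0$ if $l>m+1$. $$W=\frac{1}{\sqrt{\frac1\mu+\frac{q}{q-1}}}\begin{pmatrix}\frac{1/\sqrt{m_2}}{\sqrt{N_2}}&\frac{1/\sqrt{m_1}}{\sqrt{N_1}}\\[2pt]\frac{1/\sqrt{m_1}}{\sqrt{N_1}}&-\frac{1/\sqrt{m_2}}{\sqrt{N_2}}\end{pmatrix}.$$ $$G_l=\sum_{m,m'=1}^{q-2}\alpha_{m,l}\alpha_{m',l}\mathbf u_m\cdot\mathbf u_{m'}+\frac{2}{\sqrt{N_1}}\sum_{m=1}^{q-2}\alpha_{m,l}\mathbf u_m\cdot\mathbf u_{q-1}+\frac{2}{\sqrt{N_2}}\sum_{m=1}^{q-2}\alpha_{m,l}\mathbf u_m\cdot\mathbf u_q,$$ $$T=\frac{x_2^2-1}{2N_2}\mathbf u_q\cdot\mathbf u_q+\frac{x_1^2-1}{2N_1}\mathbf u_{q-1}\cdot\mathbf u_{q-1}+\frac{x_1x_2-1}{\sqrt{N_1}\sqrt{N_2}}\mathbf u_q\cdot\mathbf u_{q-1}.$$ *)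

From HB Require Import structures.
From mathcomp Require Import all_boot all_order all_algebra.
Set Implicit Arguments. Unset Strict Implicit. Unset Printing Implicit Defensive.
Import Order.TTheory GRing.Theory Num.Theory.
Local Open Scope ring_scope.

Section Defs.
Variables (R : rcfType) (q : nat) (mu : R).

Definition qR : R := q%:R.

Definition disc : R := mu ^+ 2 - (4 / qR - 2) * mu + 1.
Definition lam1 : R := ((mu - 1) + Num.sqrt disc) / 2.
Definition lam2 : R := ((mu - 1) - Num.sqrt disc) / 2.
Definition m1 : R := lam1 + 1.
Definition m2 : R := lam2 + 1.
Definition x1 : R := 1 - qR * m1.
Definition x2 : R := 1 - qR * m2.
Definition N1 : R := qR - 1 + x1 ^+ 2.
Definition N2 : R := qR - 1 + x2 ^+ 2.

Definition Wc : R := 1 / Num.sqrt (1 / mu + qR / (qR - 1)).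
Definition W11 : R := Wc * ((1 / Num.sqrt m2) / Num.sqrt N2).
Definition W12 : R := Wc * ((1 / Num.sqrt m1) / Num.sqrt N1).
Definition W21 : R := Wc * ((1 / Num.sqrt m1) / Num.sqrt N1).
Definition W22 : R := - (Wc * ((1 / Num.sqrt m2) / Num.sqrt N2)).

Definition alpha (m l : nat) : R :=
  if (l <= m)%N then 1 / Num.sqrt (m%:R * (m.+1)%:R)
  else if l == m.+1 then - m%:R / Num.sqrt (m%:R * (m.+1)%:R)
  else 0.

Variable n : nat.

Definition dot (a b : 'rV[R]_n) : R := \sum_(i < n) a 0 i * b 0 i.

Definition G (u : nat -> 'rV[R]_n) (uq1 uq : 'rV[R]_n) (l : nat) : R :=
  \sum_(1 <= m < q.-1) \sum_(1 <= m' < q.-1)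
      alpha m l * alpha m' l * dot (u m) (u m')
  + 2 / Num.sqrt N1 * \sum_(1 <= m < q.-1) alpha m l * dot (u m) uq1
  + 2 / Num.sqrt N2 * \sum_(1 <= m < q.-1) alpha m l * dot (u m) uq.

Definition T (uq1 uq : 'rV[R]_n) : R :=
  (x2 ^+ 2 - 1) / (2 * N2) * dot uq uq
  + (x1 ^+ 2 - 1) / (2 * N1) * dot uq1 uq1
  + (x1 * x2 - 1) / (Num.sqrt N1 * Num.sqrt N2) * dot uq uq1.

Definition wvec (u : nat -> 'rV[R]_n) (l : nat) : 'rV[R]_n :=
  \sum_(1 <= m < q.-1) alpha m l *: u m.

End Defs.

From HB Require Import structures.
From mathcomp Require Import all_boot all_order all_algebra.
From mathcomp Require Import ring lra.
Import Order.TTheory GRing.Theory Num.Theory.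
Local Open Scope ring_scope.

(* The shifted eigenvalues m1, m2 are the roots of m^2 - (mu + 1) m + mu / q, so
   x1 x2 = 1 - q and N_j = x_j (x_j - x_k) for {j, k} = {1, 2}.  Put
   B = u_q / sqrt N2 + u_{q-1} / sqrt N1 and A = x2 u_q / sqrt N2 + x1 u_{q-1} / sqrt N1.
   Bilinearity gives G_l = |w_l|^2 + 2 w_l.B and T = (|A|^2 - |B|^2) / 2.
   The Vieta relations give 1/(m1 N1) + 1/(m2 N2) = 1/mu + Q,
   x1/(m1 N1) + x2/(m2 N2) = 1/mu and m1 m2 N1 N2 Q = (x1 - x2)^2 mu, which turn
   B into sqrt (1/mu + Q) r and A into (r / mu + sqrt (Q / mu) s) / sqrt (1/mu + Q). *)

Section Dot.
Variables (R : rcfType) (n : nat).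
Implicit Types (a b c : 'rV[R]_n) (k : R).

Lemma dotC a b : dot a b = dot b a.
Proof. by apply: eq_bigr => i _; rewrite mulrC. Qed.

Lemma dotDl a b c : dot (a + b) c = dot a c + dot b c.
Proof. by rewrite /dot -big_split; apply: eq_bigr => i _; rewrite mxE mulrDl. Qed.

Lemma dotZl k a b : dot (k *: a) b = k * dot a b.
Proof. by rewrite /dot mulr_sumr; apply: eq_bigr => i _; rewrite mxE mulrA. Qed.

Lemma dot0l b : dot 0 b = 0.
Proof. by rewrite -(scale0r 0) dotZl mul0r. Qed.

Lemma dotDr a b c : dot a (b + c) = dot a b + dot a c.
Proof. by rewrite dotC dotDl !(dotC a). Qed.

Lemma dotZr k a b : dot a (k *: b) = k * dot a b.
Proof. by rewrite dotC dotZl dotC. Qed.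

Lemma dot_suml I (r : seq I) (P : pred I) (F : I -> 'rV[R]_n) b :
  dot (\sum_(i <- r | P i) F i) b = \sum_(i <- r | P i) dot (F i) b.
Proof. exact: (big_morph (fun a => dot a b) (fun a c => dotDl a c b) (dot0l b)). Qed.

Lemma dot_sumr I (r : seq I) (P : pred I) (F : I -> 'rV[R]_n) a :
  dot a (\sum_(i <- r | P i) F i) = \sum_(i <- r | P i) dot a (F i).
Proof. by rewrite dotC dot_suml; apply: eq_bigr => i _; rewrite dotC. Qed.

Lemma dotZZ k a b : dot (k *: a) (k *: b) = k ^+ 2 * dot a b.
Proof. by rewrite dotZl dotZr mulrA -expr2. Qed.

Lemma dot_comb2 (k1 k2 l1 l2 : R) a b :
  dot (k1 *: a + k2 *: b) (l1 *: a + l2 *: b) =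
  k1 * l1 * dot a a + (k1 * l2 + k2 * l1) * dot a b + k2 * l2 * dot b b.
Proof. by rewrite !(dotDl, dotDr, dotZl, dotZr) (dotC b a); ring. Qed.

End Dot.

Lemma scaler_comb2 (R : pzRingType) (V : lmodType R) (k l a1 b1 a2 b2 : R) (r s : V) :
  k *: (a1 *: r + b1 *: s) + l *: (a2 *: r + b2 *: s) =
  (k * a1 + l * a2) *: r + (k * b1 + l * b2) *: s.
Proof. by rewrite !scalerDr !scalerA addrACA -!scalerDl. Qed.

Lemma divr_sqrtr (R : rcfType) (c : R) : 0 <= c -> c / Num.sqrt c = Num.sqrt c.
Proof.
rewrite le_eqVlt => /predU1P[<-|c_gt0]; first by rewrite sqrtr0 mul0r.
by rewrite -{1}(sqr_sqrtr (ltW c_gt0)) expr2 mulfK // gt_eqF ?sqrtr_gt0.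
Qed.

Section Vieta.
Context {F : fieldType} {q mu m1 m2 : F}.
Hypotheses (m_sum : m1 + m2 = mu + 1) (m_prod : m1 * m2 = mu / q).
Hypotheses (q_neq0 : q != 0) (q_neq1 : q != 1) (mu_neq0 : mu != 0) (m1_neq_m2 : m1 != m2).

Local Notation x1 := (1 - q * m1).
Local Notation x2 := (1 - q * m2).
Local Notation N1 := (q - 1 + x1 ^+ 2).
Local Notation N2 := (q - 1 + x2 ^+ 2).

Lemma x1_mul_x2 : x1 * x2 = 1 - q.
Proof.
have -> : x1 * x2 = 1 - q * (m1 + m2) + q ^+ 2 * (m1 * m2) by ring.
by rewrite m_sum m_prod; field.
Qed.

Lemma x1_sub_x2 : x1 - x2 = q * (m2 - m1).
Proof. by ring. Qed.

Lemma N1_factor : N1 = x1 * (x1 - x2).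
Proof. by rewrite -opprB -x1_mul_x2; ring. Qed.

Lemma N2_factor : N2 = x2 * (x2 - x1).
Proof. by rewrite -opprB -x1_mul_x2; ring. Qed.

Let m1_m2_neq0 : m1 * m2 != 0.
Proof. by rewrite m_prod mulf_neq0 ?invr_eq0. Qed.

Let m1_neq0 : m1 != 0.
Proof. by apply: contraNneq m1_m2_neq0 => ->; rewrite mul0r. Qed.

Let m2_neq0 : m2 != 0.
Proof. by apply: contraNneq m1_m2_neq0 => ->; rewrite mulr0. Qed.

Let x1_neq0 : x1 != 0.
Proof.
by apply: contra_neq q_neq1 => x1_0; apply/eqP; rewrite eq_sym -subr_eq0 -x1_mul_x2 x1_0 mul0r.
Qed.

Let x2_neq0 : x2 != 0.
Proof.
by apply: contra_neq q_neq1 => x2_0; apply/eqP; rewrite eq_sym -subr_eq0 -x1_mul_x2 x2_0 mulr0.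
Qed.

Let m2_sub_m1_neq0 : m2 - m1 != 0.
Proof. by rewrite subr_eq0 eq_sym. Qed.

Let x1_sub_x2_neq0 : x1 - x2 != 0.
Proof. by rewrite x1_sub_x2 mulf_neq0. Qed.

Let x2_sub_x1_neq0 : x2 - x1 != 0.
Proof. by rewrite -opprB oppr_eq0. Qed.

Let q_sub1_neq0 : q - 1 != 0.
Proof. by rewrite subr_eq0. Qed.

Let one_sub_q_neq0 : 1 - q != 0.
Proof. by rewrite subr_eq0 eq_sym. Qed.

Let nonzero := (q_neq0, mu_neq0, m1_neq0, m2_neq0, x1_neq0, x2_neq0, m2_sub_m1_neq0,
  x1_sub_x2_neq0, x2_sub_x1_neq0, q_sub1_neq0, one_sub_q_neq0).

Lemma inv_mN_add : 1 / (m1 * N1) + 1 / (m2 * N2) = 1 / mu + q / (q - 1).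
Proof.
rewrite N1_factor N2_factor.
have -> : 1 / (m1 * (x1 * (x1 - x2))) + 1 / (m2 * (x2 * (x2 - x1)))
    = (m2 * x2 - m1 * x1) / ((m1 * m2) * (x1 * x2) * (x1 - x2)).
  by field; rewrite ?nonzero.
have -> : m2 * x2 - m1 * x1 = (x1 - x2) * ((1 - q * (m1 + m2)) / q).
  by rewrite x1_sub_x2; field.
rewrite m_sum m_prod x1_mul_x2.
by field; rewrite ?nonzero.
Qed.

Lemma x_inv_mN_add : x1 / (m1 * N1) + x2 / (m2 * N2) = 1 / mu.
Proof.
rewrite N1_factor N2_factor.
have -> : x1 / (m1 * (x1 * (x1 - x2))) + x2 / (m2 * (x2 * (x2 - x1)))
    = (m2 - m1) / ((m1 * m2) * (x1 - x2)).
  by field; rewrite ?nonzero.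
rewrite m_prod x1_sub_x2.
by field; rewrite ?nonzero.
Qed.

Lemma mN_prod : m1 * m2 * N1 * N2 * (q / (q - 1)) = (x1 - x2) ^+ 2 * mu.
Proof.
rewrite N1_factor N2_factor.
have -> : m1 * m2 * (x1 * (x1 - x2)) * (x2 * (x2 - x1)) * (q / (q - 1))
    = - (m1 * m2) * (x1 * x2) * (x1 - x2) ^+ 2 * (q / (q - 1)) by ring.
rewrite m_prod x1_mul_x2.
by field; rewrite ?nonzero.
Qed.

End Vieta.

Definition combN {R : rcfType} {n : nat} (q : nat) (mu y1 y2 : R) (v1 v : 'rV[R]_n) :=
  (y2 / Num.sqrt (N2 q mu)) *: v + (y1 / Num.sqrt (N1 q mu)) *: v1.

Lemma G_wvecE (R : rcfType) (q : nat) (mu : R) (n : nat) (u : nat -> 'rV[R]_n)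
    (v1 v : 'rV[R]_n) (l : nat) :
  G q mu u v1 v l =
    dot (wvec q u l) (wvec q u l) + 2 * dot (wvec q u l) (combN q mu 1 1 v1 v).
Proof.
have dot_wvec a : dot (wvec q u l) a = \sum_(1 <= m < q.-1) alpha R m l * dot (u m) a.
  by rewrite /wvec dot_suml; apply: eq_bigr => m _; rewrite dotZl.
have dot_ww : dot (wvec q u l) (wvec q u l) =
    \sum_(1 <= m < q.-1) \sum_(1 <= m' < q.-1) alpha R m l * alpha R m' l * dot (u m) (u m').
  rewrite dot_wvec; apply: eq_bigr => m _.
  by rewrite dot_sumr mulr_sumr; apply: eq_bigr => m' _; rewrite dotZr mulrA.
by rewrite /G /combN dotDr !dotZr dot_ww !dot_wvec; ring.
Qed.

Section Spectrum.
Variables (R : rcfType) (q : nat) (mu : R).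
Hypotheses (q_ge2 : (2 <= q)%N) (mu_gt0 : 0 < mu).

Local Notation Q := (q%:R / (q%:R - 1) : R).
Local Notation m1 := (m1 q mu).
Local Notation m2 := (m2 q mu).
Local Notation x1 := (x1 q mu).
Local Notation x2 := (x2 q mu).
Local Notation N1 := (N1 q mu).
Local Notation N2 := (N2 q mu).

Let qR_ge2 : (2 : R) <= q%:R.
Proof. by rewrite (ler_nat R 2 q). Qed.

Let qR_neq0 : q%:R != 0 :> R.
Proof. by rewrite pnatr_eq0 -lt0n ltnW. Qed.

Let qR_neq1 : q%:R != 1 :> R.
Proof. by rewrite pnatr_eq1 neq_ltn q_ge2 orbT. Qed.

Let qR_sub1_gt0 : 0 < q%:R - 1 :> R.
Proof. by have := qR_ge2; lra. Qed.

Lemma disc_gt0 : 0 < disc q mu.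
Proof.
have q2 := qR_ge2.
have q4 : 4 / q%:R <= 2 :> R by rewrite ler_pdivrMr; lra.
have : 0 <= (2 - 4 / q%:R) * mu by rewrite mulr_ge0 ?subr_ge0 // ltW.
rewrite /disc /qR; nra.
Qed.

Lemma m1_add_m2 : m1 + m2 = mu + 1.
Proof. by rewrite /m1 /m2 /lam1 /lam2; field. Qed.

Lemma m1_mul_m2 : m1 * m2 = mu / q%:R.
Proof.
have -> : m1 * m2 = ((mu + 1) ^+ 2 - Num.sqrt (disc q mu) ^+ 2) / 4.
  by rewrite /m1 /m2 /lam1 /lam2; field.
by rewrite sqr_sqrtr ?ltW ?disc_gt0 // /disc /qR; field.
Qed.

Lemma m2_lt_m1 : m2 < m1.
Proof.
have : 0 < Num.sqrt (disc q mu) by rewrite sqrtr_gt0 disc_gt0.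
rewrite /m1 /m2 /lam1 /lam2; lra.
Qed.

Lemma m2_gt0 : 0 < m2.
Proof.
have := m2_lt_m1.
have : 0 < m1 + m2 by rewrite m1_add_m2 addr_gt0.
have : 0 < m1 * m2 by rewrite m1_mul_m2 divr_gt0 // ltr0n ltnW.
nra.
Qed.

Lemma m1_gt0 : 0 < m1.
Proof. exact: lt_trans m2_gt0 m2_lt_m1. Qed.

Lemma N1_gt0 : 0 < N1.
Proof. by have := qR_ge2; have := sqr_ge0 x1; rewrite /N1 /qR; lra. Qed.

Lemma N2_gt0 : 0 < N2.
Proof. by have := qR_ge2; have := sqr_ge0 x2; rewrite /N2 /qR; lra. Qed.

Lemma x1_lt_x2 : x1 < x2.
Proof. by rewrite /x1 /x2 ltrD2l ltrN2 ltr_pM2l ?m2_lt_m1 // ltr0n ltnW. Qed.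

Let m1_neq_m2 : m1 != m2.
Proof. by rewrite (gt_eqF m2_lt_m1). Qed.

Let mu_neq0 : mu != 0.
Proof. by rewrite (gt_eqF mu_gt0). Qed.

Let Q_gt0 : 0 < Q.
Proof. by rewrite divr_gt0 // ltr0n ltnW. Qed.

Let c_gt0 : 0 < 1 / mu + Q.
Proof. by rewrite addr_gt0 // divr_gt0. Qed.

Let sqrt_neq0 (a : R) : 0 < a -> Num.sqrt a != 0.
Proof. by move=> a_gt0; rewrite gt_eqF ?sqrtr_gt0. Qed.

Let sqrt_neq0s := (sqrt_neq0, m1_gt0, m2_gt0, N1_gt0, N2_gt0, mu_gt0).

Let inv_mN_sum : 1 / (m1 * N1) + 1 / (m2 * N2) = 1 / mu + Q.
Proof. exact: inv_mN_add m1_add_m2 m1_mul_m2 qR_neq0 qR_neq1 mu_neq0 m1_neq_m2. Qed.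

Let x_inv_mN_sum : x1 / (m1 * N1) + x2 / (m2 * N2) = 1 / mu.
Proof. exact: x_inv_mN_add m1_add_m2 m1_mul_m2 qR_neq0 qR_neq1 mu_neq0 m1_neq_m2. Qed.

Lemma sqrt_mNQ_prod :
  Num.sqrt m1 * Num.sqrt m2 * Num.sqrt N1 * Num.sqrt N2 * Num.sqrt Q = (x2 - x1) * Num.sqrt mu.
Proof.
have [m1_ge0 m2_ge0] := (ltW m1_gt0, ltW m2_gt0).
have [N1_ge0 N2_ge0] := (ltW N1_gt0, ltW N2_gt0).
rewrite -!sqrtrM ?mulr_ge0 //.
rewrite (mN_prod m1_add_m2 m1_mul_m2 qR_neq0 qR_neq1 : m1 * m2 * N1 * N2 * Q = (x1 - x2) ^+ 2 * mu).
have x1_sub_x2_lt0 : x1 - x2 < 0 by rewrite subr_lt0 x1_lt_x2.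
by rewrite sqrtrM ?sqr_ge0 // sqrtr_sqr (ltr0_norm x1_sub_x2_lt0) opprB.
Qed.

Lemma T_half_diff_sq (n : nat) (v1 v : 'rV[R]_n) :
  T q mu v1 v =
    (dot (combN q mu x1 x2 v1 v) (combN q mu x1 x2 v1 v)
     - dot (combN q mu 1 1 v1 v) (combN q mu 1 1 v1 v)) / 2.
Proof.
rewrite /T /combN !dot_comb2.
rewrite -{1}(sqr_sqrtr (ltW N2_gt0)) -{1}(sqr_sqrtr (ltW N1_gt0)).
by field; rewrite ?sqrt_neq0s.
Qed.

Variables (n : nat) (rt st : 'rV[R]_n).

Local Notation uq := ((Num.sqrt m2)^-1 *: (W11 q mu *: rt + W12 q mu *: st)).
Local Notation uq1 := ((Num.sqrt m1)^-1 *: (W21 q mu *: rt + W22 q mu *: st)).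

Lemma combN_uqE (y1 y2 : R) :
  combN q mu y1 y2 uq1 uq =
  Wc q mu *: ((y1 / (m1 * N1) + y2 / (m2 * N2)) *: rt
    + ((y2 - y1) / (Num.sqrt m1 * Num.sqrt m2 * Num.sqrt N1 * Num.sqrt N2)) *: st).
Proof.
have sqr_sqrtM (a b : R) : 0 < a -> 0 < b -> (Num.sqrt a * Num.sqrt b) ^+ 2 = a * b.
  by move=> a_gt0 b_gt0; rewrite exprMn !sqr_sqrtr ?ltW.
rewrite /combN /W11 /W12 /W21 /W22 !scalerA scaler_comb2 !scalerDr !scalerA.
rewrite -(sqr_sqrtM _ _ m1_gt0 N1_gt0) -(sqr_sqrtM _ _ m2_gt0 N2_gt0).
by congr (_ *: _ + _ *: _); field; rewrite ?sqrt_neq0s.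
Qed.

Lemma combN_uq_1 : combN q mu 1 1 uq1 uq = Num.sqrt (1 / mu + Q) *: rt.
Proof.
rewrite combN_uqE inv_mN_sum subrr mul0r scale0r addr0 scalerA.
by rewrite /Wc /qR mul1r mulrC divr_sqrtr ?ltW.
Qed.

Lemma combN_uq_x :
  combN q mu x1 x2 uq1 uq = Wc q mu *: (mu^-1 *: rt + (Num.sqrt Q / Num.sqrt mu) *: st).
Proof.
have smu_neq0 : Num.sqrt mu != 0 by rewrite sqrt_neq0.
rewrite combN_uqE x_inv_mN_sum div1r; congr (_ *: (_ + _ *: _)).
rewrite -(mulfK smu_neq0 (x2 - x1)) -sqrt_mNQ_prod.
by field; rewrite ?sqrt_neq0s.
Qed.

Lemma G_uqE (u : nat -> 'rV[R]_n) (l : nat) :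
  G q mu u uq1 uq l =
    dot (wvec q u l) (wvec q u l) + 2 * Num.sqrt (1 / mu + Q) * dot (wvec q u l) rt.
Proof. by rewrite G_wvecE combN_uq_1 dotZr mulrA. Qed.

Lemma T_uqE :
  T q mu uq1 uq =
    1 / 2 * (1 + mu * Q)^-1 *
      (- Q * (2 + mu * Q) * dot rt rt + Q * dot st st
       + 2 / Num.sqrt mu * Num.sqrt Q * dot rt st).
Proof.
have Wc_sqr : Wc q mu ^+ 2 = 1 / (1 / mu + Q).
  by rewrite /Wc /qR expr_div_n (sqr_sqrtr (ltW c_gt0)) expr1n.
have k_sqr : Num.sqrt Q / Num.sqrt mu * (Num.sqrt Q / Num.sqrt mu) = Q / mu.
  by rewrite -expr2 expr_div_n (sqr_sqrtr (ltW Q_gt0)) (sqr_sqrtr (ltW mu_gt0)).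
rewrite T_half_diff_sq combN_uq_x combN_uq_1 !dotZZ Wc_sqr (sqr_sqrtr (ltW c_gt0)).
rewrite dot_comb2 k_sqr.
have denom_gt0 : 0 < q%:R - 1 + mu * q%:R by rewrite addr_gt0 // mulr_gt0 // ltr0n ltnW.
by field; rewrite ?sqrt_neq0s ?mu_neq0 ?(gt_eqF qR_sub1_gt0) ?(gt_eqF denom_gt0).
Qed.

End Spectrum.

Theorem corollary3 (R : rcfType) (n q : nat) (mu : R)
  (u : nat -> 'rV[R]_n) (rt st : 'rV[R]_n) :
  (1 <= n)%N -> (2 <= q)%N -> 0 < mu ->
  let uq := (Num.sqrt (m2 q mu))^-1 *: (W11 q mu *: rt + W12 q mu *: st) in
  let uq1 := (Num.sqrt (m1 q mu))^-1 *: (W21 q mu *: rt + W22 q mu *: st) in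
  let Q := (q%:R : R) / (q%:R - 1) in
  (forall l : nat, (1 <= l <= q)%N ->
     G q mu u uq1 uq l =
       dot (wvec q u l) (wvec q u l)
       + 2 * Num.sqrt (1 / mu + Q) * dot (wvec q u l) rt)
  /\
  T q mu uq1 uq =
    1 / 2 * (1 + mu * Q)^-1 *
      (- Q * (2 + mu * Q) * dot rt rt + Q * dot st st
       + 2 / Num.sqrt mu * Num.sqrt Q * dot rt st).
Proof.
move=> _ q_ge2 mu_gt0 uq uq1 Q.
by split=> [l _|]; [exact: G_uqE | exact: T_uqE].
Qed.
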